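(* Let $X_1,X_2,\dots,X_n$ be independent nonnegative random variables and set $S_n=X_1+\dots+X_n$. For $L\ge0$ such that $\mathbb{P}(S_n\le L)>0$ and any $\delta,\delta'$ with $0<\delta'\le\delta$, \[\mathbb{P}(X_1\ge\delta\mid S_n\le L)\le\frac{L}{\mathbb{P}(X_1\le\delta-\delta')\sum_{k=2}^n\mathbb{E}\big[X_k\mathbf{1}_{\{X_k\le\delta'\}}\big]}.\] *)

From HB Require Import structures.
From mathcomp Require Import all_boot all_order all_algebra.
From mathcomp Require Import all_classical all_reals all_analysis.
Set Implicit Arguments. Unset Strict Implicit. Unset Printing Implicit Defensive.
Import Order.TTheory GRing.Theory Num.Theory.
Local Open Scope classical_set_scope.
Local Open Scope ring_scope.

Definition mutually_independent d (T : measurableType d) (R : realType)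
  (P : probability T R) (I : set nat) (X : nat -> T -> R) : Prop :=
  forall (J : seq nat) (B : nat -> set R),
    uniq J -> (forall j, j \in J -> I j) ->
    (forall j, j \in J -> measurable (B j)) ->
    P (\bigcap_(j in [set j | j \in J]) (X j @^-1` B j)) =
    (\prod_(j <- J) P (X j @^-1` B j))%E.

(* Write R_k for the sum of the X_j with j outside {1, k}, for 2 <= k <= n.
   On {X_1 >= delta, S_n <= L} we have R_k <= L - delta, and on
   {X_1 <= delta - delta', R_k <= L - delta, X_k <= delta'} we have S_n <= L.
   As X_k, X_1 and R_k are independent,
     P(X_1 >= delta, S_n <= L) P(X_1 <= delta - delta') E[X_k; X_k <= delta']
       <= P(R_k <= L - delta) P(X_1 <= delta - delta') E[X_k; X_k <= delta']
        = E[X_k; X_k <= delta', X_1 <= delta - delta', R_k <= L - delta]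
       <= E[X_k; S_n <= L],
   and summing over k gives at most E[S_n - X_1; S_n <= L] <= L P(S_n <= L).
   Independence of R_k from (X_k, X_1) follows from the product rule on finite
   families by a pi-lambda argument on cylinder events. *)

From HB Require Import structures.
From mathcomp Require Import all_boot all_order all_algebra.
From mathcomp Require Import all_classical all_reals all_analysis.
From mathcomp Require Import measurable_realfun zify lra.
Set Implicit Arguments. Unset Strict Implicit. Unset Printing Implicit Defensive.
Import Order.TTheory GRing.Theory Num.Theory.
Local Open Scope classical_set_scope.
Local Open Scope ring_scope.

Lemma measurable_set_le d (T : measurableType d) (R : realType) (f g : T -> R) :
  measurable_fun setT f -> measurable_fun setT g -> measurable [set x | f x <= g x].
Proof. by move=> mf mg; rewrite -[X in measurable X]setTI; exact: measurable_fun_le. Qed.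

Section independent_event.
Local Open Scope ereal_scope.
Context d (T : measurableType d) (R : realType) (P : probability T R).

Lemma lambda_system_indep (F : set T) : measurable F ->
  lambda_system setT [set A | measurable A /\ P (F `&` A) = P F * P A].
Proof.
move=> mF; have finP A : measurable A -> P A < +oo.
  by move=> mA; rewrite (le_lt_trans (probability_le1 P mA)) ?ltey.
split => //.
- by split => //; rewrite setIT probability_setT mule1.
- move=> A B BA [mA PFA] [mB PFB]; split; first exact: measurableD.
  have mFA : measurable (F `&` A) by exact: measurableI.
  have FAB : F `&` A `&` B = F `&` B by rewrite -setIA (setIidr BA).
  rewrite setIDA !measureD ?finP // FAB (setIidr BA).
  rewrite muleBr ?fin_num_adde_defl ?fin_numN ?fin_num_measure //.
  by congr (_ - _); [exact: PFA | exact: PFB].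
- move=> G ndG GP; have mG i : measurable (G i) by have [] := GP i.
  split; first exact: bigcupT_measurable.
  have PFG : (fun i => P (F `&` G i)) @ \oo --> P (F `&` \bigcup_i G i).
    rewrite setI_bigcupr; apply: nondecreasing_cvg_mu.
    + by move=> i; exact: measurableI.
    + by apply: bigcupT_measurable => i; exact: measurableI.
    + by move=> i j ij; apply/subsetPset; apply: setIS; apply/subsetPset; exact: ndG.
  have PG : (fun i => P (F `&` G i)) @ \oo --> P F * P (\bigcup_i G i).
    rewrite (_ : (fun i => _) = fun i => P F * P (G i)); last first.
      by apply/funext => i; have [] := GP i.
    apply: cvgeZl; first exact: fin_num_measure.
    by apply: nondecreasing_cvg_mu => //; exact: bigcupT_measurable.
  by rewrite -(cvg_lim _ PFG) // -(cvg_lim _ PG).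
Qed.

Lemma integral_indep_indic (Y : {RV P >-> R}) (E : set T) (g : R -> R) :
  measurable E -> measurable_fun setT g -> (forall y, 0 <= g y)%R ->
  (forall B, measurable B -> P (Y @^-1` B `&` E) = P (Y @^-1` B) * P E) ->
  \int[P]_x (g (Y x) * \1_E x)%:E = P E * \int[P]_x (g (Y x))%:E.
Proof.
move=> mE mg g_ge0 indepYE.
have -> : \int[P]_x (g (Y x) * \1_E x)%:E = \int[P]_(x in E) (g (Y x))%:E.
  rewrite [RHS]integral_mkcond; apply: eq_integral => x _.
  by rewrite patchE indicE; case: (x \in E); rewrite ?mulr1 ?mulr0.
rewrite (eq_measure_integral (mrestr P mE)); last first.
  by move=> A mA AE; rewrite -[RHS]/(P (A `&` E)) setIidl.
rewrite -[E in \int[_]_(x in E) _]setCK -setTD -ge0_negligible_integral //;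
  last 4 first.
- exact: measurableC.
- by apply/measurable_EFinP; exact: measurableT_comp.
- by move=> x _; rewrite lee_fin.
- by rewrite -[LHS]/(P (~` E `&` E)) setICl measure0.
have PE_ge0 : (0 <= fine (P E))%R by apply: fine_ge0.
have PEE : P E = (fine (P E))%:E by rewrite fineK // fin_num_measure.
have pushY (m : {measure set T -> \bar R}) :
    \int[m]_x (g (Y x))%:E = \int[pushforward m Y]_y (g y)%:E.
  rewrite ge0_integral_pushforward ?preimage_setT //.
  - exact: measurableT_comp.
  - by move=> y _; rewrite lee_fin.
rewrite !pushY PEE -[X in X%:E]/((NngNum PE_ge0)%:num) -ge0_integral_mscale //.
- apply: eq_measure_integral => B mB _.
  rewrite -[LHS]/(P (Y @^-1` B `&` E)) indepYE // muleC.
  by rewrite -[RHS]/((fine (P E))%:E * P (Y @^-1` B)) -PEE.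
- exact: measurableT_comp.
- by move=> y _; rewrite lee_fin.
Qed.

End independent_event.

Section cylinder.
Local Open Scope ereal_scope.
Context d (T : measurableType d) (R : realType) (P : probability T R).
Variable X : nat -> {RV P >-> R}.

Definition cylinder (J : seq nat) (B : nat -> set R) : set T :=
  \bigcap_(j in [set j | j \in J]) X j @^-1` B j.

Definition cylinders (J : seq nat) : set (set T) :=
  [set A | exists2 B, (forall j, measurable (B j)) & A = cylinder J B].

Lemma measurable_cylinder J B : (forall j, measurable (B j)) ->
  measurable (cylinder J B).
Proof.
move=> mB; apply: bigcap_measurableType => j _.
by rewrite -[X in measurable X]setTI; exact: measurable_funPT.
Qed.

Lemma eq_cylinder J B B' : {in J, B =1 B'} -> cylinder J B = cylinder J B'.
Proof.
move=> BB'; apply/seteqP; split=> x Bx j /= Jj; have := Bx j Jj; rewrite /= BB' //.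
Qed.

Lemma cylinder_cat K J B : cylinder (K ++ J) B = cylinder K B `&` cylinder J B.
Proof.
apply/seteqP; split=> [x KJx|x [Kx Jx] j].
  by split=> j Jj; apply: KJx; rewrite /= mem_cat Jj ?orbT.
by rewrite /= mem_cat => /orP[]; [exact: Kx | exact: Jx].
Qed.

Lemma cylinder2 i j B : cylinder [:: i; j] B = X i @^-1` B i `&` X j @^-1` B j.
Proof.
apply/seteqP; split=> [x ijx|x [ix jx] l].
  by split; apply: ijx; rewrite /= !inE eqxx ?orbT.
by rewrite /= !inE => /orP[] /eqP ->.
Qed.

Lemma cylinders_setI_closed J : setI_closed (cylinders J).
Proof.
move=> _ _ [B mB ->] [C mC ->]; exists (fun j => B j `&` C j).
  by move=> j; exact: measurableI.
apply/seteqP; split=> [x [Bx Cx] j Jj|x BCx]; first by split; [exact: Bx|exact: Cx].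
by split=> j /BCx [].
Qed.

Lemma sum_le_sigma_cylinders J c :
  <<s cylinders J >> [set x | (\sum_(j <- J) X j x <= c)%R].
Proof.
pose T' := g_sigma_algebraType (cylinders J).
have mX j : j \in J -> measurable_fun (setT : set T') (X j : T' -> R).
  move=> Jj _ B mB; rewrite setTI; apply: sub_sigma_algebra.
  exists (fun i => if i == j then B else setT); first by move=> i; case: eqP.
  apply/seteqP; split=> [x Bx i _|x BJx]; first by case: eqP => [->|].
  by have := BJx j Jj; rewrite /= eqxx.
have mS s : {subset s <= J} ->
    measurable_fun (setT : set T') (fun x : T' => (\sum_(j <- s) X j x)%R).
  elim: s => [_|j s IHs sJ].
    by under eq_fun do rewrite big_nil; exact: measurable_cst.
  under eq_fun do rewrite big_cons.
  apply: measurable_funD; first by apply: mX; apply: sJ; exact: mem_head.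
  by apply: IHs => i si; apply: sJ; rewrite inE si orbT.
have := mS J (fun j Jj => Jj) measurableT _ (measurable_itv `]-oo, c]).
by rewrite setTI.
Qed.

Section independence.
Variable I : set nat.
Hypothesis indepX : mutually_independent P I (fun i => X i : T -> R).

Lemma cylinder_indep K J B : uniq (K ++ J) -> (forall j, j \in K ++ J -> I j) ->
  (forall j, measurable (B j)) ->
  P (cylinder K B `&` cylinder J B) = P (cylinder K B) * P (cylinder J B).
Proof.
move=> KJ_uniq KJ_I mB; have := KJ_uniq; rewrite cat_uniq => /and3P[K_uniq _ J_uniq].
rewrite -cylinder_cat !indepX // => [|j Jj|j Kj]; last 2 first.
- by apply: KJ_I; rewrite mem_cat Jj orbT.
- by apply: KJ_I; rewrite mem_cat Kj.
by rewrite big_cat.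
Qed.

Lemma sigma_cylinders_indep K J BK A : uniq (K ++ J) ->
  (forall j, j \in K ++ J -> I j) -> (forall j, measurable (BK j)) ->
  <<s cylinders J >> A -> P (cylinder K BK `&` A) = P (cylinder K BK) * P A.
Proof.
move=> KJ_uniq KJ_I mBK sA.
suff [] : [set A | measurable A /\ P (cylinder K BK `&` A) = P (cylinder K BK) * P A] A.
  by [].
apply: lambda_system_subset sA => //.
- exact: cylinders_setI_closed.
- exact/lambda_system_indep/measurable_cylinder.
move=> _ [B mB ->]; split; first exact: measurable_cylinder.
pose C j := if j \in K then BK j else B j.
have mC j : measurable (C j) by rewrite /C; case: ifP.
have := KJ_uniq; rewrite cat_uniq => /and3P[_ /hasPn KJ_disj _].
rewrite (@eq_cylinder K BK C); last by move=> j Kj; rewrite /C Kj.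
rewrite (@eq_cylinder J B C); last by move=> j /KJ_disj /negbTE; rewrite /C => ->.
exact: cylinder_indep.
Qed.

Lemma indep_pair_sum_le i j J (B C : set R) c :
  uniq [:: i, j & J] -> (forall l, l \in [:: i, j & J] -> I l) ->
  measurable B -> measurable C ->
  P (X i @^-1` B `&` X j @^-1` C `&` [set x | (\sum_(l <- J) X l x <= c)%R]) =
  P (X i @^-1` B) * P (X j @^-1` C) * P [set x | (\sum_(l <- J) X l x <= c)%R].
Proof.
move=> ijJ_uniq ijJ_I mB mC.
have ij : (j == i) = false.
  by move: ijJ_uniq => /= /andP[]; rewrite inE eq_sym => /norP[/negbTE].
pose BC l := if l == i then B else C.
have mBC l : measurable (BC l) by rewrite /BC; case: ifP.
have cylBC : cylinder [:: i; j] BC = X i @^-1` B `&` X j @^-1` C.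
  by rewrite cylinder2 /BC eqxx ij.
rewrite -cylBC (@sigma_cylinders_indep [:: i; j] J BC) //;
  last exact: sum_le_sigma_cylinders.
rewrite indepX //.
- by rewrite big_cons big_seq1 /BC eqxx ij.
- by rewrite /= inE eq_sym ij.
- move=> l ijl; apply: ijJ_I.
  by rewrite !inE in ijl *; case/orP: ijl => ->; rewrite ?orbT.
Qed.

End independence.
End cylinder.

(* [0 < r] matters: [0 / 0 = 0 * +oo = 0] in [\bar R]. *)
Lemma lee_pdiv_cross (R : realFieldType) (a b e : \bar R) (r : R) :
  (0 <= a -> a \is a fin_num -> 0 < b -> b \is a fin_num -> 0 < r%:E -> 0 <= e ->
  a * e <= r%:E * b -> a / b <= r%:E / e)%E.
Proof.
move: a b => [a| |] [b| |] // a_ge0 _ b_gt0 _ r_gt0.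
rewrite lte_fin in b_gt0; rewrite inver gt_eqF // -EFinM.
case: e => [s| |] //.
- rewrite lee_fin le_eqVlt => /predU1P[<- _|s_gt0].
    by rewrite inver eqxx gt0_muley ?leey.
  rewrite inver gt_eqF // -!EFinM !lee_fin => ab.
  by rewrite ler_pdivrMr // mulrAC ler_pdivlMr.
- rewrite invey mule0 => _; rewrite lee_fin in a_ge0.
  have [->|a_gt0] := eqVneq a 0%R; first by rewrite -EFinM mul0r.
  by rewrite gt0_muley ?lte_fin ?lt_def ?a_gt0 // leye_eq -EFinM.
Qed.

Section conditional_tail_bound.
Local Open Scope ereal_scope.
Context d (T : measurableType d) (R : realType) (P : probability T R)
  (n : nat) (X : nat -> {RV P >-> R}) (L delta delta' : R).
Hypothesis n_gt0 : (0 < n)%N.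
Hypothesis indepX :
  mutually_independent P [set i | (1 <= i <= n)%N] (fun i => X i : T -> R).
Hypothesis X_ge0 : forall i x, (1 <= i <= n)%N -> (0 <= X i x)%R.

Local Notation Sn x := (\sum_(1 <= i < n.+1) X i x)%R.
Local Notation Sn_le_L := [set x | (Sn x <= L)%R].
Local Notation trunc_mean k :=
  (\int[P]_x (X k x * \1_[set y | (X k y <= delta')%R] x)%:E).

Lemma measurable_Sn_le c : measurable [set x | (Sn x <= c)%R].
Proof. by apply: measurable_set_le => //; exact: measurable_sum. Qed.

Let others k := [seq j <- index_iota 2 n.+1 | j != k].

Local Notation rest k c := [set x | (\sum_(j <- others k) X j x <= c)%R].
Local Notation X1_low := [set x | (X 1%N x <= delta - delta')%R].

Lemma Sn_split k x : (2 <= k <= n)%N ->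
  Sn x = (X 1%N x + (X k x + \sum_(j <- others k) X j x))%R.
Proof.
move=> /andP[k_ge2 k_le_n]; rewrite big_ltn ?ltnS //; congr (_ + _)%R.
rewrite (bigD1_seq k) /= ?iota_uniq ?mem_index_iota ?k_ge2 ?ltnS //.
by rewrite big_filter.
Qed.

Lemma X1_le_Sn x : (X 1%N x <= Sn x)%R.
Proof.
rewrite big_ltn ?ltnS // lerDl big_nat_cond; apply: sumr_ge0 => k.
by rewrite andbT => k_range; apply: X_ge0; lia.
Qed.

Lemma mem_others k j : j \in others k -> (2 <= j <= n)%N /\ j != k.
Proof. by rewrite mem_filter mem_index_iota ltnS => /andP[]. Qed.

Lemma uniq_k1_others k : (2 <= k <= n)%N -> uniq [:: k, 1%N & others k].
Proof.
move=> k_range; rewrite /= !inE negb_or filter_uniq ?iota_uniq // andbT.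
rewrite -andbA; apply/and3P; split.
- by apply/eqP; lia.
- by apply/negP => /mem_others[_ /eqP].
- by apply/negP => /mem_others[/andP[]].
Qed.

Lemma k1_others_range k l : (2 <= k <= n)%N ->
  l \in [:: k, 1%N & others k] -> (1 <= l <= n)%N.
Proof.
by move=> k_range; rewrite !inE => /orP[/eqP->|/orP[/eqP->|/mem_others[]]]; lia.
Qed.

Lemma trunc_mean_ge0 k : (2 <= k <= n)%N -> 0 <= trunc_mean k.
Proof.
move=> k_range; apply: integral_ge0 => x _.
by rewrite lee_fin mulr_ge0 // X_ge0 //; lia.
Qed.

Lemma integral_trunc_indep k c : (2 <= k <= n)%N ->
  \int[P]_x (X k x * \1_[set y | X k y <= delta'] x * \1_(X1_low `&` rest k c) x)%:E =
  P X1_low * P (rest k c) * trunc_mean k.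
Proof.
move=> k_range.
have mX1_low : measurable X1_low by exact: measurable_set_le.
have mrest : measurable (rest k c).
  by apply: measurable_set_le => //; exact: measurable_sum.
have indep3 B : measurable B ->
    P (X k @^-1` B `&` X1_low `&` rest k c) = P (X k @^-1` B) * P X1_low * P (rest k c).
  move=> mB; have mC : measurable [set y : R | (y <= delta - delta')%R].
    by rewrite -set_itvNyc; exact: measurable_itv.
  apply: (indep_pair_sum_le indepX c (uniq_k1_others k_range) _ mB mC).
  by move=> l /(k1_others_range k_range).
have PE : P (X1_low `&` rest k c) = P X1_low * P (rest k c).
  by have := indep3 setT measurableT; rewrite preimage_setT setTI probability_setT mul1e.
(* |y| rather than y keeps the integrand nonnegative on all of R. *)
pose g y := (`|y| * \1_[set z | z <= delta'] y)%R.
have mg : measurable_fun setT g.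
  apply: measurable_funM; first exact: normr_measurable.
  by apply: measurable_indic; rewrite -set_itvNyc; exact: measurable_itv.
have Xk_ge0 x : (0 <= X k x)%R by apply: X_ge0; lia.
transitivity (\int[P]_x (g (X k x) * \1_(X1_low `&` rest k c) x)%:E).
  by apply: eq_integral => x _; rewrite /g ger0_norm.
have g_ge0 y : (0 <= g y)%R by rewrite mulr_ge0.
have indepE B : measurable B ->
    P (X k @^-1` B `&` (X1_low `&` rest k c)) =
    P (X k @^-1` B) * P (X1_low `&` rest k c).
  by move=> mB; rewrite setIA indep3 // PE muleA.
rewrite (integral_indep_indic (measurableI _ _ mX1_low mrest) mg g_ge0 indepE) -PE.
by congr (_ * _); apply: eq_integral => x _; rewrite /g ger0_norm.
Qed.

Lemma mul_trunc_mean_le k : (2 <= k <= n)%N ->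
  P ([set x | (delta <= X 1%N x)%R] `&` Sn_le_L) * (P X1_low * trunc_mean k)
  <= \int[P]_x (X k x * \1_Sn_le_L x)%:E.
Proof.
move=> k_range; have Xk_ge0 x : (0 <= X k x)%R by apply: X_ge0; lia.
have mSn_le_L := measurable_Sn_le L.
have PF_le : P ([set x | (delta <= X 1%N x)%R] `&` Sn_le_L) <= P (rest k (L - delta)%R).
  apply: le_measure; rewrite ?inE.
  - by apply: measurableI => //; exact: measurable_set_le.
  - by apply: measurable_set_le => //; exact: measurable_sum.
  move=> x [/= X1_ge]; rewrite (Sn_split x k_range) => Sn_le.
  by have := Xk_ge0 x; lra.
apply: le_trans (lee_wpmul2r _ PF_le) _; first by rewrite mule_ge0 ?trunc_mean_ge0.
rewrite muleA (muleC (P (rest _ _))) -(integral_trunc_indep _ k_range).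
apply: ge0_le_integral => //.
- by move=> x _; rewrite lee_fin !mulr_ge0.
- apply/measurable_EFinP; apply: measurable_funM; last first.
    by apply: measurable_indic; apply: measurableI; apply: measurable_set_le => //;
      exact: measurable_sum.
  by apply: measurable_funM => //; apply: measurable_indic; exact: measurable_set_le.
- by apply/measurable_EFinP; apply: measurable_funM => //; exact: measurable_indic.
move=> x _; rewrite lee_fin -mulrA ler_wpM2l // !indicE.
have [Ex|] := boolP (x \in X1_low `&` rest k (L - delta)%R); last by rewrite mulr0.
have [Xk_le|] := boolP (x \in [set y | (X k y <= delta')%R]); last by rewrite mul0r.
suff -> : x \in Sn_le_L by rewrite mulr1.
rewrite in_setE /= (Sn_split x k_range).
by move: Ex Xk_le; rewrite !in_setE /= => -[]; lra.
Qed.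

Lemma sum_integral_indic_le : (0 <= L)%R ->
  \sum_(2 <= k < n.+1) \int[P]_x (X k x * \1_Sn_le_L x)%:E <= L%:E * P Sn_le_L.
Proof.
move=> L_ge0.
have mSn_le_L := measurable_Sn_le L.
have mXA k : measurable_fun setT (fun x => (`|X k x| * \1_Sn_le_L x)%:E).
  apply/measurable_EFinP; apply: measurable_funM; last exact: measurable_indic.
  exact: measurableT_comp.
rewrite (eq_big_nat _ _
    (F2 := fun k => \int[P]_x (`|X k x| * \1_Sn_le_L x)%:E)); last first.
  move=> k k_range; apply: eq_integral => x _; rewrite ger0_norm // X_ge0 //; lia.
have XA_ge0 k x : setT x -> 0 <= (`|X k x| * \1_Sn_le_L x)%:E.
  by rewrite lee_fin mulr_ge0.
rewrite -(ge0_integral_sum P measurableT mXA XA_ge0).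
have -> : L%:E * P Sn_le_L = \int[P]_x (L * \1_Sn_le_L x)%:E.
  rewrite (integralZl_indic _ (fun _ => Sn_le_L)) ?integral_indic ?setIT //.
  by move=> L_lt0; move: (lt_le_trans L_lt0 L_ge0); rewrite ltxx.
apply: ge0_le_integral => //.
- by move=> x _; apply: sume_ge0 => k _; exact: XA_ge0.
- exact: emeasurable_sum.
- by apply/measurable_EFinP; apply: measurable_funM => //; exact: measurable_indic.
move=> x _; rewrite sumEFin lee_fin -big_distrl /= indicE.
have [xA|] := boolP (x \in Sn_le_L); last by rewrite !mulr0.
rewrite !mulr1 (eq_big_nat _ _ (F2 := X^~ x)) => [|k k_range]; last first.
  by rewrite ger0_norm // X_ge0 //; lia.
have X1_ge0 : (0 <= X 1%N x)%R by apply: X_ge0; lia.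
by move: xA; rewrite in_setE /= big_ltn ?ltnS //; lra.
Qed.

Lemma mul_sum_trunc_mean_le : (0 <= L)%R ->
  P ([set x | (delta <= X 1%N x)%R] `&` Sn_le_L) *
    (P X1_low * \sum_(2 <= k < n.+1) trunc_mean k)
  <= L%:E * P Sn_le_L.
Proof.
move=> L_ge0; apply: le_trans (sum_integral_indic_le L_ge0).
rewrite big_nat_cond [leRHS]big_nat_cond !ge0_sume_distrr; first last.
- by move=> k /andP[k_range _]; exact: trunc_mean_ge0.
- by move=> k /andP[k_range _]; rewrite mule_ge0 ?trunc_mean_ge0.
by apply: lee_sum => k /andP[k_range _]; exact: mul_trunc_mean_le.
Qed.

End conditional_tail_bound.

Theorem lemma3p2 (d : measure_display) (T : measurableType d) (R : realType)
  (P : probability T R) (n : nat) (X : nat -> {RV P >-> R})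
  (L delta delta' : R) :
  (0 < n)%N ->
  mutually_independent P [set i | (1 <= i <= n)%N] (fun i => X i : T -> R) ->
  (forall i x, (1 <= i <= n)%N -> 0 <= X i x) ->
  0 <= L ->
  (0 < P [set x | (\sum_(1 <= i < n.+1) X i x <= L)%R])%E ->
  0 < delta' -> delta' <= delta ->
  (P ([set x | (delta <= X 1%N x)%R] `&` [set x | (\sum_(1 <= i < n.+1) X i x <= L)%R])
     / P [set x | (\sum_(1 <= i < n.+1) X i x <= L)%R]
   <= L%:E / (P [set x | (X 1%N x <= delta - delta')%R]
              * \sum_(2 <= k < n.+1)
                  \int[P]_x (X k x * \1_[set y | (X k y <= delta')%R] x)%R%:E))%E.
Proof.
move=> n_gt0 indepX X_ge0 L_ge0 PSn_gt0 delta'_gt0 delta'_le_delta.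
move: L_ge0; rewrite le_eqVlt => /predU1P[L0|L_gt0].
  (* The right-hand side is 0 even if its denominator vanishes ([0 * +oo = 0]),
     so the event has to be shown empty. *)
  have -> : [set x | (delta <= X 1%N x)%R] `&`
      [set x | (\sum_(1 <= i < n.+1) X i x <= L)%R] = set0.
    apply/seteqP; split=> // x [/= X1_ge]; have := X1_le_Sn n_gt0 X_ge0 x.
    rewrite -L0; lra.
  by rewrite measure0 mul0e -L0 mul0e.
have mSn_le_L := measurable_Sn_le n X L.
apply: lee_pdiv_cross; rewrite ?measure_ge0 ?fin_num_measure ?lte_fin //.
- by apply: measurableI => //; exact: measurable_set_le.
- rewrite mule_ge0 // big_nat_cond sume_ge0 // => k /andP[k_range _].
  exact: (trunc_mean_ge0 _ n_gt0 X_ge0).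
- exact/mul_sum_trunc_mean_le/ltW.
Qed.
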